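(* Let $f(z)=z+\sum_{n\ge2}a_nz^n$ belong to $\Omega$. Then for every $\mu\in\mathbb{C}$, $$|a_3-\mu a_2^2|\le \tfrac14\max\{1,|\mu|\},$$ and the inequality is sharp.
   Context: $\Delta=\{z\in\mathbb{C}:|z|<1\}$. $\mathcal{A}$ is the class of functions $f$ analytic in $\Delta$ with $f(0)=0$, $f'(0)=1$. $\Omega$ is the class of $f\in\mathcal{A}$ with $|zf'(z)-f(z)|<\tfrac12$ for all $z\in\Delta$. *)

From Stdlib Require Import Reals Lra.
Open Scope R_scope.

Definition Cplx : Type := (R * R)%type.

Definition Cmk (x y : R) : Cplx := (x, y).
Definition C0 : Cplx := (0, 0).
Definition C1 : Cplx := (1, 0).
Definition Cadd (z w : Cplx) : Cplx := (fst z + fst w, snd z + snd w).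
Definition Copp (z : Cplx) : Cplx := (- fst z, - snd z).
Definition Csub (z w : Cplx) : Cplx := Cadd z (Copp w).
Definition Cmul (z w : Cplx) : Cplx :=
  (fst z * fst w - snd z * snd w, fst z * snd w + snd z * fst w).
Fixpoint Cpow (z : Cplx) (n : nat) : Cplx :=
  match n with O => C1 | S k => Cmul z (Cpow z k) end.
Definition Cnorm (z : Cplx) : R := sqrt (fst z * fst z + snd z * snd z).

Fixpoint Cpartial (a : nat -> Cplx) (z : Cplx) (n : nat) : Cplx :=
  match n with O => C0 | S k => Cadd (Cpartial a z k) (Cmul (a k) (Cpow z k)) end.

Definition Cseries_sum (a : nat -> Cplx) (z l : Cplx) : Prop :=
  forall eps : R, 0 < eps -> exists N : nat, forall n : nat, (N <= n)%nat ->
    Cnorm (Csub (Cpartial a z n) l) < eps.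

Definition Cderiv (f : Cplx -> Cplx) (z d : Cplx) : Prop :=
  forall eps : R, 0 < eps -> exists delta : R, 0 < delta /\
    forall h : Cplx, 0 < Cnorm h < delta ->
      Cnorm (Csub (Csub (f (Cadd z h)) (f z)) (Cmul d h)) <= eps * Cnorm h.

Definition in_Omega (f : Cplx -> Cplx) (a : nat -> Cplx) : Prop :=
  a 0%nat = C0 /\ a 1%nat = C1 /\
  (forall z : Cplx, Cnorm z < 1 -> Cseries_sum a z (f z)) /\
  (forall z : Cplx, Cnorm z < 1 ->
     exists d : Cplx, Cderiv f z d /\ Cnorm (Csub (Cmul z d) (f z)) < / 2).

(* For f = Σ a_n z^n in Ω the function h(z) = 2 (z f'(z) - f(z)) = Σ 2 (n-1) a_n z^n is
   bounded by 1 on the disc, and its coefficients of order 1, 2, 3 are 0, B2 = 2 a_2 and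
   B3 = 4 a_3.  The bound |a_3 - μ a_2^2| <= max(1, |μ|)/4 follows by the triangle
   inequality from Schur's inequality |B3| <= 1 - |B2|^2, proved as follows.
   1. Termwise differentiation: on each ray t ↦ t u (|u| = 1) the real and imaginary parts
      of f are real power series (Coquelicot's PSeries), so Σ (n-1) a_n z^n converges to
      z f'(z) - f(z) on the disc ([g_series]).
   2. Discrete Parseval: sample a power series bounded by 1 at the M-th roots of unity on
      the circle |z| = r.  Its discrete Fourier coefficients tend to r^n b_n as M grows
      ([dft_approx]), and Bessel's inequality for the samples of h(z)(1 + q z) gives
      r^4 |b_2 + q b_1|^2 + r^6 |b_3 + q b_2|^2 <= 1 + r^2 |q|^2 ([circle_coeff_bound]).
   3. Letting r -> 1 and choosing q = conj(B2) B3 / (1 - |B2|^2) yields Schur's inequality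
      ([schur_bound]), whence the bound ([fekete_szego_upper]).
   Sharpness: z + z^2/2 attains the bound when |μ| >= 1, and z + z^3/4 when |μ| < 1. *)

From Stdlib Require Import Reals Lra Lia Psatz Classical ClassicalEpsilon.
From Coquelicot Require Import Coquelicot.
Open Scope R_scope.

Definition nsq (z : Cplx) : R := fst z * fst z + snd z * snd z.
Definition Csc (t : R) (z : Cplx) : Cplx := (t * fst z, t * snd z).

Ltac cplx_ring :=
  unfold Csub, Cadd, Copp, Cmul, Csc, Cconj, C0, C1;
  apply injective_projections; simpl; first [ring | field; try assumption].

Lemma nsq_ge0 z : 0 <= nsq z.
Proof. unfold nsq; nra. Qed.

Lemma nsq_Csc t z : nsq (Csc t z) = t * t * nsq z.
Proof. unfold nsq, Csc; simpl; ring. Qed.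

Lemma Cnorm_Cmod z : Cnorm z = Cmod z.
Proof. unfold Cnorm, Cmod; f_equal; simpl; ring. Qed.

Lemma Cnorm_ge0 z : 0 <= Cnorm z.
Proof. apply sqrt_pos. Qed.

Lemma Cnorm_sq z : Cnorm z * Cnorm z = nsq z.
Proof. apply sqrt_sqrt, nsq_ge0. Qed.

Lemma Cnorm_mul z w : Cnorm (Cmul z w) = Cnorm z * Cnorm w.
Proof. rewrite !Cnorm_Cmod. apply Cmod_mult. Qed.

Lemma Cnorm_add z w : Cnorm (Cadd z w) <= Cnorm z + Cnorm w.
Proof. rewrite !Cnorm_Cmod. apply Cmod_triangle. Qed.

Lemma Cnorm_opp z : Cnorm (Copp z) = Cnorm z.
Proof. rewrite !Cnorm_Cmod. apply Cmod_opp. Qed.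

Lemma Cnorm_sub z w : Cnorm (Csub z w) <= Cnorm z + Cnorm w.
Proof. unfold Csub. rewrite <- (Cnorm_opp w). apply Cnorm_add. Qed.

Lemma Cnorm_sub_ge z w : Cnorm w <= Cnorm (Csub z w) + Cnorm z.
Proof.
  replace w with (Cadd (Copp (Csub z w)) z) at 1 by cplx_ring.
  rewrite <- (Cnorm_opp (Csub z w)). apply Cnorm_add.
Qed.

Lemma Cnorm_Csc t z : Cnorm (Csc t z) = Rabs t * Cnorm z.
Proof.
  unfold Cnorm. fold (nsq (Csc t z)) (nsq z).
  rewrite nsq_Csc, sqrt_mult_alt by nra. f_equal. apply sqrt_Rsqr_abs.
Qed.

Lemma Cnorm_C0 : Cnorm C0 = 0.
Proof. rewrite Cnorm_Cmod. apply Cmod_0. Qed.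

Lemma Cnorm_C1 : Cnorm C1 = 1.
Proof. rewrite Cnorm_Cmod. apply Cmod_1. Qed.

Lemma Cnorm_real x : 0 <= x -> Cnorm (x, 0) = x.
Proof.
  intros Hx. rewrite Cnorm_Cmod. change (x, 0) with (RtoC x).
  rewrite Cmod_R. apply Rabs_pos_eq, Hx.
Qed.

Lemma fst_le_Cnorm z : Rabs (fst z) <= Cnorm z.
Proof. rewrite Cnorm_Cmod. apply re_le_Cmod. Qed.

Lemma snd_le_Cnorm z : Rabs (snd z) <= Cnorm z.
Proof.
  replace (Cnorm z) with (Cnorm (snd z, fst z)) by (unfold Cnorm; simpl; f_equal; ring).
  apply (fst_le_Cnorm (snd z, fst z)).
Qed.

Lemma Cnorm_le_sq z B : 0 <= B -> nsq z <= B * B -> Cnorm z <= B.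
Proof.
  intros HB H. unfold Cnorm. rewrite <- (sqrt_square B) by exact HB.
  apply sqrt_le_1_alt. exact H.
Qed.

Lemma Cnorm_le_comp z : Cnorm z <= Rabs (fst z) + Rabs (snd z).
Proof.
  pose proof (Rabs_pos (fst z)). pose proof (Rabs_pos (snd z)).
  apply Cnorm_le_sq; [lra|]. unfold nsq.
  assert (E1 : Rabs (fst z) * Rabs (fst z) = fst z * fst z)
    by (rewrite <- Rabs_mult; apply Rabs_pos_eq; nra).
  assert (E2 : Rabs (snd z) * Rabs (snd z) = snd z * snd z)
    by (rewrite <- Rabs_mult; apply Rabs_pos_eq; nra).
  nra.
Qed.

Lemma Cnorm_pow z m : Cnorm (Cpow z m) = Cnorm z ^ m.
Proof. induction m; simpl. apply Cnorm_C1. rewrite Cnorm_mul, IHm. reflexivity. Qed.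

(* Convergence of a sequence of complex numbers; [Cseries_sum a z l] unfolds to
   [CL (Cpartial a z) l]. *)
Definition CL (s : nat -> Cplx) (l : Cplx) : Prop :=
  forall eps : R, 0 < eps -> exists N : nat, forall n : nat, (N <= n)%nat ->
    Cnorm (Csub (s n) l) < eps.

Lemma CL_const c : CL (fun _ => c) c.
Proof.
  intros eps He. exists O. intros n _.
  replace (Csub c c) with C0 by cplx_ring. rewrite Cnorm_C0. exact He.
Qed.

Lemma CL_ext s t l N0 : (forall n, (N0 <= n)%nat -> s n = t n) -> CL s l -> CL t l.
Proof.
  intros E Hs eps He. destruct (Hs eps He) as [N H]. exists (Nat.max N N0).
  intros n Hn. rewrite <- E by lia. apply H. lia.
Qed.

Lemma CL_add s t l m : CL s l -> CL t m -> CL (fun n => Cadd (s n) (t n)) (Cadd l m).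
Proof.
  intros Hs Ht eps He.
  destruct (Hs (eps/2)) as [N1 H1]; [lra|]. destruct (Ht (eps/2)) as [N2 H2]; [lra|].
  exists (Nat.max N1 N2). intros n Hn.
  specialize (H1 n ltac:(lia)). specialize (H2 n ltac:(lia)).
  replace (Csub (Cadd (s n) (t n)) (Cadd l m)) with (Cadd (Csub (s n) l) (Csub (t n) m))
    by cplx_ring.
  pose proof (Cnorm_add (Csub (s n) l) (Csub (t n) m)). lra.
Qed.

Lemma CL_cmul c s l : CL s l -> CL (fun n => Cmul c (s n)) (Cmul c l).
Proof.
  intros Hs eps He. pose proof (Cnorm_ge0 c) as Hc.
  destruct (Hs (eps / (Cnorm c + 1))) as [N H1]; [apply Rdiv_lt_0_compat; lra|].
  exists N. intros n Hn. specialize (H1 n Hn).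
  replace (Csub (Cmul c (s n)) (Cmul c l)) with (Cmul c (Csub (s n) l)) by cplx_ring.
  rewrite Cnorm_mul. pose proof (Cnorm_ge0 (Csub (s n) l)).
  apply Rle_lt_trans with (Cnorm c * (eps / (Cnorm c + 1))); [apply Rmult_le_compat_l; lra|].
  apply Rlt_le_trans with ((Cnorm c + 1) * (eps / (Cnorm c + 1))).
  - apply Rmult_lt_compat_r; [apply Rdiv_lt_0_compat|]; lra.
  - right; field; lra.
Qed.

Lemma CL_cmul_r c s l : CL s l -> CL (fun n => Cmul (s n) c) (Cmul l c).
Proof.
  intros H. replace (Cmul l c) with (Cmul c l) by cplx_ring.
  apply (CL_ext (fun n => Cmul c (s n)) _ _ O); [intros n _; cplx_ring|].
  apply CL_cmul, H.
Qed.

Lemma CL_le s l B N0 : CL s l -> (forall n, (N0 <= n)%nat -> Cnorm (s n) <= B) -> Cnorm l <= B.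
Proof.
  intros Hs Hb. apply Rnot_lt_le. intro Hlt.
  destruct (Hs (Cnorm l - B)) as [N H]; [lra|].
  specialize (H (Nat.max N N0) ltac:(lia)). specialize (Hb (Nat.max N N0) ltac:(lia)).
  pose proof (Cnorm_sub_ge (s (Nat.max N N0)) l). lra.
Qed.

Lemma CL_comp s l :
  Un_cv (fun n => fst (s n)) (fst l) -> Un_cv (fun n => snd (s n)) (snd l) -> CL s l.
Proof.
  intros H1 H2 eps He.
  destruct (H1 (eps/2)) as [N1 HN1]; [lra|]. destruct (H2 (eps/2)) as [N2 HN2]; [lra|].
  exists (Nat.max N1 N2). intros n Hn.
  specialize (HN1 n ltac:(lia)). specialize (HN2 n ltac:(lia)). unfold R_dist in *.
  pose proof (Cnorm_le_comp (Csub (s n) l)) as Hc. simpl in Hc.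
  replace (fst (s n) + - fst l) with (fst (s n) - fst l) in Hc by ring.
  replace (snd (s n) + - snd l) with (snd (s n) - snd l) in Hc by ring.
  lra.
Qed.

Fixpoint csum (F : nat -> Cplx) (M : nat) : Cplx :=
  match M with O => C0 | S k => Cadd (csum F k) (F k) end.

Fixpoint rsum (F : nat -> R) (M : nat) : R :=
  match M with O => 0 | S k => rsum F k + F k end.

Lemma rsum_le F G M : (forall k, (k < M)%nat -> F k <= G k) -> rsum F M <= rsum G M.
Proof.
  induction M as [|M IH]; simpl; intros H; [lra|].
  assert (rsum F M <= rsum G M) by (apply IH; intros; apply H; lia).
  specialize (H M ltac:(lia)). lra.
Qed.

Lemma rsum_ext F G M : (forall k, (k < M)%nat -> F k = G k) -> rsum F M = rsum G M.
Proof.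
  intros H. apply Rle_antisym; apply rsum_le; intros k Hk; rewrite H by exact Hk; lra.
Qed.

Lemma rsum_ge0 F M : (forall k, 0 <= F k) -> 0 <= rsum F M.
Proof. intros H. induction M; simpl; [lra|]. specialize (H M). lra. Qed.

Lemma rsum_const c M : rsum (fun _ => c) M = INR M * c.
Proof. induction M as [|M IH]; simpl rsum; [simpl; ring|]. rewrite IH, S_INR. ring. Qed.

Lemma rsum_single F M k : (k < M)%nat -> (forall j, 0 <= F j) -> F k <= rsum F M.
Proof.
  induction M as [|M IH]; simpl; intros Hk H; [lia|].
  destruct (Nat.eq_dec k M) as [->|Hne].
  - pose proof (rsum_ge0 F M H). lra.
  - pose proof (IH ltac:(lia) H). specialize (H M). lra.
Qed.

Lemma rsum_S_sum F n : rsum F (S n) = sum_f_R0 F n.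
Proof. induction n as [|n IH]; simpl in *; [ring|]. rewrite <- IH. ring. Qed.

Lemma Un_cv_rsum_inf F l : Un_cv (rsum F) l -> infinite_sum F l.
Proof.
  intros H eps He. destruct (H eps He) as [N HN]. exists N. intros n Hn.
  rewrite <- rsum_S_sum. apply HN. lia.
Qed.

Lemma inf_Un_cv_rsum F l : infinite_sum F l -> Un_cv (rsum F) l.
Proof.
  intros H eps He. destruct (H eps He) as [N HN]. exists (S N). intros n Hn.
  destruct n as [|n]; [lia|]. rewrite rsum_S_sum. apply HN. lia.
Qed.

(* Tails of a convergent series of nonnegative terms are uniformly small; the tail
   [Σ_{M <= m < N} G m] is written with an indicator so that it is an [rsum]. *)
Definition tail (G : nat -> R) (M : nat) (m : nat) : R := if Nat.leb M m then G m else 0.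

Lemma rsum_tail G M N : rsum (tail G M) N = rsum G N - rsum G (Nat.min M N).
Proof.
  induction N as [|N IH]; simpl rsum.
  - rewrite Nat.min_0_r. simpl. ring.
  - rewrite IH. unfold tail. destruct (Nat.leb_spec M N).
    + rewrite !Nat.min_l by lia. ring.
    + rewrite !Nat.min_r by lia. simpl. ring.
Qed.

Lemma tail_small G L : Un_cv (rsum G) L ->
  forall eps, 0 < eps -> exists M0, forall M N, (M0 <= M)%nat -> rsum (tail G M) N <= eps.
Proof.
  intros H eps He. destruct (H (eps/2) ltac:(lra)) as [M0 HM0]. exists M0. intros M N HM.
  rewrite rsum_tail. destruct (Nat.le_gt_cases N M) as [HN|HN].
  - rewrite Nat.min_r by exact HN. lra.
  - rewrite Nat.min_l by lia. pose proof (HM0 N ltac:(lia)). pose proof (HM0 M ltac:(lia)).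
    unfold R_dist in *. apply Rabs_def2 in H0. apply Rabs_def2 in H1. lra.
Qed.

Lemma csum_ext (F G : nat -> Cplx) M :
  (forall k, (k < M)%nat -> F k = G k) -> csum F M = csum G M.
Proof.
  induction M as [|M IH]; intros HFG; simpl; [reflexivity|].
  rewrite IH, HFG; [reflexivity|lia|]. intros k Hk. apply HFG. lia.
Qed.

Lemma csum_zero M : csum (fun _ => C0) M = C0.
Proof. induction M as [|M IH]; simpl; [reflexivity|]. rewrite IH. cplx_ring. Qed.

Lemma fst_csum F M : fst (csum F M) = rsum (fun k => fst (F k)) M.
Proof. induction M; simpl; [reflexivity|]. rewrite IHM; reflexivity. Qed.

Lemma snd_csum F M : snd (csum F M) = rsum (fun k => snd (F k)) M.
Proof. induction M; simpl; [reflexivity|]. rewrite IHM; reflexivity. Qed.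

Lemma Cnorm_csum F M : Cnorm (csum F M) <= rsum (fun k => Cnorm (F k)) M.
Proof.
  induction M; simpl; [rewrite Cnorm_C0; lra|].
  pose proof (Cnorm_add (csum F M) (F M)). lra.
Qed.

Lemma csum_add F G M : csum (fun k => Cadd (F k) (G k)) M = Cadd (csum F M) (csum G M).
Proof. induction M; simpl; [cplx_ring|]. rewrite IHM. cplx_ring. Qed.

Lemma csum_sub F G M : csum (fun k => Csub (F k) (G k)) M = Csub (csum F M) (csum G M).
Proof. induction M; simpl; [cplx_ring|]. rewrite IHM. cplx_ring. Qed.

Lemma csum_cmul c F M : csum (fun k => Cmul c (F k)) M = Cmul c (csum F M).
Proof. induction M; simpl; [cplx_ring|]. rewrite IHM. cplx_ring. Qed.

Lemma csum_cmul_r c F M : csum (fun k => Cmul (F k) c) M = Cmul (csum F M) c.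
Proof. induction M; simpl; [cplx_ring|]. rewrite IHM. cplx_ring. Qed.

Lemma csum_Csc t F M : csum (fun k => Csc t (F k)) M = Csc t (csum F M).
Proof. induction M; simpl; [cplx_ring|]. rewrite IHM. cplx_ring. Qed.

Lemma csum_swap (F : nat -> nat -> Cplx) M N :
  csum (fun k => csum (fun m => F k m) N) M = csum (fun m => csum (fun k => F k m) M) N.
Proof.
  induction N; simpl.
  - apply csum_zero.
  - rewrite csum_add, IHN. reflexivity.
Qed.

Lemma Cpartial_csum a z N : Cpartial a z N = csum (fun m => Cmul (a m) (Cpow z m)) N.
Proof. induction N; simpl; [reflexivity|]. rewrite IHN; reflexivity. Qed.

Lemma CL_csum (F : nat -> nat -> Cplx) (L : nat -> Cplx) M :
  (forall k, CL (F k) (L k)) -> CL (fun n => csum (fun k => F k n) M) (csum L M).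
Proof.
  intros H. induction M as [|M IH]; simpl; [apply CL_const|]. apply CL_add; auto.
Qed.

Definition cis (x : R) : Cplx := (cos x, sin x).

Lemma Cnorm_cis x : Cnorm (cis x) = 1.
Proof.
  unfold Cnorm, cis; simpl. pose proof (sin2_cos2 x) as H. unfold Rsqr in H.
  rewrite Rplus_comm, H. apply sqrt_1.
Qed.

Lemma cis_mul x y : Cmul (cis x) (cis y) = cis (x + y).
Proof. unfold cis, Cmul; simpl. rewrite cos_plus, sin_plus. f_equal; ring. Qed.

Lemma Cpow_cis x m : Cpow (cis x) m = cis (INR m * x).
Proof.
  induction m as [|m IH]; simpl Cpow.
  - unfold cis, C1. rewrite Rmult_0_l, cos_0, sin_0. reflexivity.
  - rewrite IH, cis_mul, S_INR. f_equal. ring.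
Qed.

Lemma Cconj_cis x : Cconj (cis x) = cis (- x).
Proof. unfold Cconj, cis; simpl. rewrite cos_neg, sin_neg. reflexivity. Qed.

Lemma sum_cos_sin M y :
  2 * sin (y/2) * rsum (fun k => cos (INR k * y)) M = sin ((INR M - /2) * y) + sin (y/2) /\
  2 * sin (y/2) * rsum (fun k => sin (INR k * y)) M = cos (y/2) - cos ((INR M - /2) * y).
Proof.
  induction M as [|M [IH1 IH2]]; simpl rsum.
  - simpl. replace ((0 - /2) * y) with (- (y/2)) by field. rewrite sin_neg, cos_neg. split; ring.
  - rewrite S_INR.
    replace ((INR M + 1 - /2) * y) with (INR M * y + y/2) by field.
    replace ((INR M - /2) * y) with (INR M * y - y/2) in IH1, IH2 by field.
    rewrite !Rmult_plus_distr_l, IH1, IH2.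
    rewrite sin_plus, sin_minus, cos_plus, cos_minus. split; ring.
Qed.

Lemma sin_2PI_nat m : sin (2 * PI * INR m) = 0.
Proof.
  replace (2 * PI * INR m) with (0 + 2 * INR m * PI) by ring. rewrite sin_period. apply sin_0.
Qed.

Lemma cos_2PI_nat m : cos (2 * PI * INR m) = 1.
Proof.
  replace (2 * PI * INR m) with (0 + 2 * INR m * PI) by ring. rewrite cos_period. apply cos_0.
Qed.

Lemma sin_frac_neq0 M m n : (m < M)%nat -> (n < M)%nat -> m <> n ->
  sin (PI * (INR m - INR n) / INR M) <> 0.
Proof.
  intros Hm Hn Hmn H. apply sin_eq_0_0 in H. destruct H as [k Hk].
  assert (HM : 0 < INR M) by (apply lt_0_INR; lia).
  assert (E : INR m - INR n = IZR k * INR M).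
  { apply Rmult_eq_reg_l with (PI / INR M);
      [|pose proof PI_RGT_0; apply Rgt_not_eq, Rdiv_lt_0_compat; lra].
    replace (PI / INR M * (IZR k * INR M)) with (IZR k * PI) by (field; lra).
    rewrite <- Hk. field. lra. }
  apply lt_INR in Hm. apply lt_INR in Hn. pose proof (pos_INR m). pose proof (pos_INR n).
  destruct (Z.lt_trichotomy k 0) as [Hk0|[Hk0|Hk0]].
  - assert (IZR k <= -1) by (apply IZR_le; lia). nra.
  - subst k. simpl in E. apply Hmn, INR_eq. lra.
  - assert (1 <= IZR k) by (apply IZR_le; lia). nra.
Qed.

Definition uk (M k : nat) : Cplx := cis (2 * PI * INR k / INR M).

Lemma Cnorm_uk M k : Cnorm (uk M k) = 1.
Proof. apply Cnorm_cis. Qed.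

Lemma uk_pow_conj M k m n :
  Cmul (Cpow (uk M k) m) (Cconj (Cpow (uk M k) n))
  = cis (INR k * (2 * PI * (INR m - INR n) / INR M)).
Proof.
  unfold uk. rewrite !Cpow_cis, Cconj_cis, cis_mul. f_equal.
  destruct (Req_dec (INR M) 0) as [E|E].
  - rewrite E. unfold Rdiv. rewrite Rinv_0. ring.
  - field. exact E.
Qed.

Lemma roots_orthogonal M m n : (m < M)%nat -> (n < M)%nat -> m <> n ->
  csum (fun k => Cmul (Cpow (uk M k) m) (Cconj (Cpow (uk M k) n))) M = C0.
Proof.
  intros Hm Hn Hmn. rewrite (csum_ext _ _ M (fun k _ => uk_pow_conj M k m n)).
  set (y := 2 * PI * (INR m - INR n) / INR M).
  assert (HM : 0 < INR M) by (apply lt_0_INR; lia).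
  assert (Hs : sin (y/2) <> 0).
  { unfold y. replace (2 * PI * (INR m - INR n) / INR M / 2) with (PI * (INR m - INR n) / INR M)
      by (field; lra).
    apply sin_frac_neq0; assumption. }
  assert (HMy : (INR M - /2) * y = 2 * PI * INR m - 2 * PI * INR n - y/2) by (unfold y; field; lra).
  destruct (sum_cos_sin M y) as [H1 H2]. rewrite HMy in H1, H2.
  rewrite !sin_minus, !cos_minus, !sin_2PI_nat, !cos_2PI_nat in H1.
  rewrite !cos_minus, !sin_minus, !sin_2PI_nat, !cos_2PI_nat in H2.
  apply injective_projections; [rewrite fst_csum|rewrite snd_csum];
    apply Rmult_eq_reg_l with (2 * sin (y/2)); try lra; unfold cis; simpl;
    [rewrite H1|rewrite H2]; ring.
Qed.

Lemma Cpow_Csc t u k : Cpow (Csc t u) k = Csc (t ^ k) (Cpow u k).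
Proof. induction k as [|k IH]; simpl; [cplx_ring|]. rewrite IH. cplx_ring. Qed.

Definition dft (y : nat -> Cplx) (M n : nat) : Cplx :=
  Csc (/ INR M) (csum (fun k => Cmul (y k) (Cconj (Cpow (uk M k) n))) M).

Definition kron (m n : nat) : Cplx := if Nat.eqb m n then C1 else C0.

Lemma csum_kron F n N : (n < N)%nat -> csum (fun m => Cmul (F m) (kron m n)) N = F n.
Proof.
  induction N as [|N IH]; intros Hn; [lia|]. simpl. unfold kron at 2.
  destruct (Nat.eqb_spec N n) as [->|Hne].
  - rewrite (csum_ext _ (fun _ => C0)), csum_zero; [cplx_ring|].
    intros m Hm. unfold kron. destruct (Nat.eqb_spec m n); [lia|cplx_ring].
  - rewrite IH by lia. cplx_ring.
Qed.

Lemma dft_monomial M m n : (m < M)%nat -> (n < M)%nat ->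
  dft (fun k => Cpow (uk M k) m) M n = kron m n.
Proof.
  intros Hm Hn. unfold dft, kron. destruct (Nat.eqb_spec m n) as [<-|Hne].
  - rewrite (csum_ext _ (fun _ => C1)).
    + assert (E : csum (fun _ => C1) M = (INR M, 0)).
      { clear. induction M as [|M IH]; simpl csum; [reflexivity|]. rewrite IH, S_INR. cplx_ring. }
      rewrite E. assert (INR M <> 0) by (apply not_0_INR; lia). cplx_ring.
    + intros k _. rewrite uk_pow_conj, Rminus_diag, Rmult_0_r, Rdiv_0_l, Rmult_0_r.
      unfold cis, C1. rewrite cos_0, sin_0. reflexivity.
  - rewrite roots_orthogonal by assumption. cplx_ring.
Qed.

Lemma dft_monomial_bound M m n : (0 < M)%nat -> Cnorm (dft (fun k => Cpow (uk M k) m) M n) <= 1.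
Proof.
  intros HM. assert (HM' : 0 < INR M) by (apply lt_0_INR; lia).
  unfold dft. rewrite Cnorm_Csc, Rabs_pos_eq by (left; apply Rinv_0_lt_compat; exact HM').
  apply Rle_trans with (/ INR M * rsum (fun _ => 1) M).
  - apply Rmult_le_compat_l; [left; apply Rinv_0_lt_compat; exact HM'|].
    eapply Rle_trans; [apply Cnorm_csum|]. apply rsum_le. intros k _.
    rewrite uk_pow_conj, Cnorm_cis. lra.
  - rewrite rsum_const. right. field. lra.
Qed.

Lemma dft_partial c r M n N :
  dft (fun k => Cpartial c (Csc r (uk M k)) N) M n =
  csum (fun m => Cmul (Csc (r ^ m) (c m)) (dft (fun k => Cpow (uk M k) m) M n)) N.
Proof.
  unfold dft.
  rewrite (csum_ext _ (fun k => csum (fun m => Cmul (Csc (r ^ m) (c m))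
             (Cmul (Cpow (uk M k) m) (Cconj (Cpow (uk M k) n)))) N)).
  - rewrite csum_swap, <- csum_Csc. apply csum_ext. intros m _.
    rewrite csum_cmul. cplx_ring.
  - intros k _. rewrite Cpartial_csum, <- csum_cmul_r. apply csum_ext. intros m _.
    rewrite Cpow_Csc. cplx_ring.
Qed.

Lemma Csc_Cmul t z : Csc t z = Cmul (t, 0) z.
Proof. cplx_ring. Qed.

Lemma dft_CL (s : nat -> nat -> Cplx) (G : nat -> Cplx) M n :
  (forall k, CL (s k) (G k)) -> CL (fun N => dft (fun k => s k N) M n) (dft G M n).
Proof.
  intros Hs. unfold dft. rewrite Csc_Cmul.
  apply (CL_ext (fun N => Cmul (/ INR M, 0)
           (csum (fun k => Cmul (s k N) (Cconj (Cpow (uk M k) n))) M)) _ _ O).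
  - intros N _. rewrite Csc_Cmul. reflexivity.
  - apply CL_cmul, (CL_csum (fun k N => Cmul (s k N) (Cconj (Cpow (uk M k) n)))).
    intros k. apply CL_cmul_r, Hs.
Qed.

(* If a power series converges on the circle of radius r to the samples G k, then the
   n-th discrete Fourier coefficient of the samples approximates r^n c_n, up to the tail
   Σ_{m >= M} |c_m| r^m: aliasing only involves the coefficients of index >= M. *)
Lemma dft_approx c G r M n B :
  0 <= r -> (n < M)%nat ->
  (forall k, CL (Cpartial c (Csc r (uk M k))) (G k)) ->
  (forall N, rsum (tail (fun m => Cnorm (c m) * r ^ m) M) N <= B) ->
  Cnorm (Csub (dft G M n) (Csc (r ^ n) (c n))) <= B.
Proof.
  intros Hr Hn Hs HB.
  apply (CL_le (fun N => Csub (dft (fun k => Cpartial c (Csc r (uk M k)) N) M n)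
                             (Csc (r ^ n) (c n))) _ _ (S n)).
  { apply CL_add; [apply (dft_CL (fun k => Cpartial c (Csc r (uk M k)))), Hs|apply CL_const]. }
  intros N HN.
  rewrite dft_partial, <- (csum_kron (fun m => Csc (r ^ m) (c m)) n N HN), <- csum_sub.
  eapply Rle_trans; [apply Cnorm_csum|]. eapply Rle_trans; [|apply (HB N)].
  apply rsum_le. intros m _.
  set (D := dft (fun k => Cpow (uk M k) m) M n).
  replace (Csub (Cmul (Csc (r ^ m) (c m)) D) (Cmul (Csc (r ^ m) (c m)) (kron m n)))
    with (Cmul (Csc (r ^ m) (c m)) (Csub D (kron m n))) by cplx_ring.
  pose proof (pow_le r m Hr).
  rewrite Cnorm_mul, Cnorm_Csc, Rabs_pos_eq by assumption.
  pose proof (Cnorm_ge0 (c m)). unfold tail.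
  destruct (Nat.leb_spec M m).
  - unfold kron. destruct (Nat.eqb_spec m n); [lia|].
    replace (Csub D C0) with D by cplx_ring.
    pose proof (dft_monomial_bound M m n ltac:(lia)) as HD. fold D in HD.
    assert (0 <= r ^ m * Cnorm (c m)) by nra.
    rewrite (Rmult_comm (Cnorm (c m))). nra.
  - unfold D. rewrite dft_monomial by lia.
    replace (Csub (kron m n) (kron m n)) with C0 by cplx_ring.
    rewrite Cnorm_C0. lra.
Qed.

(* Real inner product Re (z * conj w) on C = R^2. *)
Definition ip (z w : Cplx) : R := fst z * fst w + snd z * snd w.

Lemma rsum_affine_ip A P W M :
  rsum (fun k => A + ip (P k) W) M = INR M * A + ip (csum P M) W.
Proof.
  induction M as [|M IH]; simpl rsum; simpl csum; [unfold ip, C0; simpl; ring|].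
  rewrite IH, S_INR. unfold ip, Cadd; simpl. ring.
Qed.

Lemma nsq_uk_pow M k n : nsq (Cpow (uk M k) n) = 1.
Proof. rewrite <- Cnorm_sq, Cnorm_pow, Cnorm_uk, pow1. ring. Qed.

Lemma sum_sq_residual (y p2 p3 : nat -> Cplx) W2 W3 M :
  (forall k, nsq (p2 k) = 1) -> (forall k, nsq (p3 k) = 1) ->
  rsum (fun k => nsq (Csub (Csub (y k) (Cmul W2 (p2 k))) (Cmul W3 (p3 k)))) M =
  rsum (fun k => nsq (y k)) M - 2 * ip (csum (fun k => Cmul (y k) (Cconj (p2 k))) M) W2
  - 2 * ip (csum (fun k => Cmul (y k) (Cconj (p3 k))) M) W3 + INR M * (nsq W2 + nsq W3)
  + 2 * ip (csum (fun k => Cmul (p2 k) (Cconj (p3 k))) M) (Cmul (Cconj W2) W3).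
Proof.
  intros H2 H3. induction M as [|M IH]; simpl rsum; simpl csum; [unfold ip, C0; simpl; ring|].
  rewrite IH, S_INR.
  assert (E : nsq (Csub (Csub (y M) (Cmul W2 (p2 M))) (Cmul W3 (p3 M))) =
    nsq (y M) - 2 * ip (Cmul (y M) (Cconj (p2 M))) W2 - 2 * ip (Cmul (y M) (Cconj (p3 M))) W3
    + nsq W2 * nsq (p2 M) + nsq W3 * nsq (p3 M)
    + 2 * ip (Cmul (p2 M) (Cconj (p3 M))) (Cmul (Cconj W2) W3)).
  { unfold nsq, ip, Csub, Cadd, Copp, Cmul, Cconj; simpl. ring. }
  rewrite E, H2, H3. unfold ip, Cadd; simpl. ring.
Qed.

Lemma bessel (y : nat -> Cplx) M n p : (n < M)%nat -> (p < M)%nat -> n <> p ->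
  INR M * (nsq (dft y M n) + nsq (dft y M p)) <= rsum (fun k => nsq (y k)) M.
Proof.
  intros Hn Hp Hnp.
  assert (HM : INR M <> 0) by (apply not_0_INR; lia).
  pose proof (sum_sq_residual y (fun k => Cpow (uk M k) n) (fun k => Cpow (uk M k) p)
    (dft y M n) (dft y M p) M (fun k => nsq_uk_pow M k n) (fun k => nsq_uk_pow M k p)) as E.
  assert (Ecoef : forall j, csum (fun k => Cmul (y k) (Cconj (Cpow (uk M k) j))) M
                            = Csc (INR M) (dft y M j)).
  { intros j. unfold dft. cplx_ring. }
  cbv beta in E. rewrite !Ecoef, (roots_orthogonal M n p) in E by assumption.
  assert (0 <= rsum (fun k => nsq (Csub (Csub (y k) (Cmul (dft y M n) (Cpow (uk M k) n)))
                                             (Cmul (dft y M p) (Cpow (uk M k) p)))) M)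
    by (apply rsum_ge0; intros; apply nsq_ge0).
  unfold ip, nsq, Csc, C0 in *; simpl in *. nra.
Qed.

Lemma mean_sq q r M : (2 <= M)%nat ->
  rsum (fun k => nsq (Cadd C1 (Csc r (Cmul q (uk M k))))) M = INR M * (1 + r * r * nsq q).
Proof.
  intros HM.
  rewrite (rsum_ext _ (fun k => (1 + r * r * nsq q)
             + ip (Cmul (Cpow (uk M k) 1) (Cconj (Cpow (uk M k) 0))) (Csc (2 * r) (Cconj q)))).
  - rewrite rsum_affine_ip, roots_orthogonal by lia. unfold ip, C0; simpl. ring.
  - intros k _. pose proof (nsq_uk_pow M k 1) as H1. simpl Cpow in *.
    destruct (uk M k) as [u1 u2], q as [q1 q2].
    unfold nsq, ip, Cadd, Cmul, Csc, Cconj, C1 in *; simpl in *. nra.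
Qed.

Lemma dft_shift y q r M n :
  dft (fun k => Cmul (y k) (Cadd C1 (Csc r (Cmul q (uk M k))))) M (S n) =
  Cadd (dft y M (S n)) (Csc r (Cmul q (dft y M n))).
Proof.
  unfold dft.
  rewrite (csum_ext _ (fun k => Cadd (Cmul (y k) (Cconj (Cpow (uk M k) (S n))))
                                     (Cmul (Csc r q) (Cmul (y k) (Cconj (Cpow (uk M k) n)))))).
  - rewrite csum_add, csum_cmul. cplx_ring.
  - intros k _.
    assert (Hshift : Cmul (uk M k) (Cconj (Cpow (uk M k) (S n))) = Cconj (Cpow (uk M k) n)).
    { unfold uk. rewrite !Cpow_cis, !Cconj_cis, cis_mul, S_INR. f_equal. ring. }
    rewrite <- Hshift. cplx_ring.
Qed.

Lemma dft_two_coeff_bound (y : nat -> Cplx) q r M : (4 <= M)%nat ->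
  (forall k, Cnorm (y k) <= 1) ->
  nsq (Cadd (dft y M 2) (Csc r (Cmul q (dft y M 1)))) +
  nsq (Cadd (dft y M 3) (Csc r (Cmul q (dft y M 2)))) <= 1 + r * r * nsq q.
Proof.
  intros HM Hy.
  set (Y := fun k => Cmul (y k) (Cadd C1 (Csc r (Cmul q (uk M k))))).
  assert (HMpos : 0 < INR M) by (apply lt_0_INR; lia).
  assert (Hmean : rsum (fun k => nsq (Y k)) M <= INR M * (1 + r * r * nsq q)).
  { rewrite <- mean_sq by lia. apply rsum_le. intros k _. unfold Y.
    rewrite <- !Cnorm_sq, Cnorm_mul.
    pose proof (Hy k). pose proof (Cnorm_ge0 (y k)).
    pose proof (Cnorm_ge0 (Cadd C1 (Csc r (Cmul q (uk M k))))).
    set (w := Cnorm (Cadd C1 (Csc r (Cmul q (uk M k))))) in *.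
    assert (Cnorm (y k) * w <= w) by nra.
    apply Rmult_le_compat; nra. }
  pose proof (bessel Y M 2 3 ltac:(lia) ltac:(lia) ltac:(lia)) as HB.
  unfold Y in HB, Hmean. rewrite !dft_shift in HB.
  apply Rmult_le_reg_l with (INR M); [exact HMpos|]. lra.
Qed.

Lemma nsq_ge_of_close Y Z eta : Cnorm (Csub Y Z) <= eta -> nsq Z - 2 * eta * Cnorm Z <= nsq Y.
Proof.
  intros H. pose proof (Cnorm_sub_ge Y Z) as HZ.
  rewrite <- !Cnorm_sq. pose proof (Cnorm_ge0 Z). pose proof (Cnorm_ge0 Y).
  pose proof (Cnorm_ge0 (Csub Y Z)).
  destruct (Rle_lt_dec eta (Cnorm Z)); [assert (0 <= Cnorm Z - eta <= Cnorm Y) by lra|]; nra.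
Qed.

Lemma le_of_le_eps A C D : 0 <= C -> (forall eps, 0 < eps -> A - eps * C <= D) -> A <= D.
Proof.
  intros HC H. apply Rnot_lt_le. intros Hlt.
  specialize (H ((A - D) / (C + 1)) ltac:(apply Rdiv_lt_0_compat; lra)).
  assert ((A - D) / (C + 1) * C < A - D); [|lra].
  apply Rlt_le_trans with ((A - D) / (C + 1) * (C + 1)).
  - apply Rmult_lt_compat_l; [apply Rdiv_lt_0_compat|]; lra.
  - right; field; lra.
Qed.

Lemma nsq_sum_le_of_approx Z2 Z3 B :
  (forall eps, 0 < eps -> exists Y2 Y3, Cnorm (Csub Y2 Z2) <= eps /\ Cnorm (Csub Y3 Z3) <= eps /\
                                  nsq Y2 + nsq Y3 <= B) ->
  nsq Z2 + nsq Z3 <= B.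
Proof.
  intros H. pose proof (Cnorm_ge0 Z2). pose proof (Cnorm_ge0 Z3).
  apply (le_of_le_eps _ (2 * (Cnorm Z2 + Cnorm Z3))); [lra|].
  intros eps Heps. destruct (H eps Heps) as [Y2 [Y3 [H2 [H3 HY]]]].
  pose proof (nsq_ge_of_close _ _ _ H2). pose proof (nsq_ge_of_close _ _ _ H3). lra.
Qed.

(* The key estimate for a power series h = Σ b_n z^n bounded by 1 on the circle |z| = r
   (and absolutely convergent there): for every q,
   r^4 |b_2 + q b_1|^2 + r^6 |b_3 + q b_2|^2 <= 1 + r^2 |q|^2.
   It follows from the discrete estimate [dft_two_coeff_bound] for the samples of h at the
   scaled M-th roots of unity, whose Fourier coefficients tend to r^n b_n as M grows. *)
Section CircleEstimate.

Variables (b : nat -> Cplx) (h : Cplx -> Cplx) (r : R).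
Hypothesis r_ge0 : 0 <= r.
Hypothesis h_series : forall u, Cnorm u = 1 -> Cseries_sum b (Csc r u) (h (Csc r u)).
Hypothesis h_bound : forall u, Cnorm u = 1 -> Cnorm (h (Csc r u)) <= 1.
Hypothesis b_abs : exists L, Un_cv (rsum (fun m => Cnorm (b m) * r ^ m)) L.

Let samples (M : nat) (k : nat) : Cplx := h (Csc r (uk M k)).

Lemma dft_samples_converge : forall eps, 0 < eps -> exists M0, forall M n,
  (M0 <= M)%nat -> (n < M)%nat -> Cnorm (Csub (dft (samples M) M n) (Csc (r ^ n) (b n))) <= eps.
Proof.
  intros eps Heps. destruct b_abs as [L HL].
  destruct (tail_small _ L HL eps Heps) as [M0 HM0]. exists M0. intros M n HM Hn.
  apply (dft_approx b (samples M) r M n eps r_ge0 Hn).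
  - intros k. apply h_series, Cnorm_uk.
  - intros N. apply HM0, HM.
Qed.

(* One step of the approximation: the coefficient of z^(n+1) in h(z)(1 + q z). *)
Lemma shifted_coeff_close X1 X0 q n eps :
  Cnorm (Csub X1 (Csc (r ^ S n) (b (S n)))) <= eps -> Cnorm (Csub X0 (Csc (r ^ n) (b n))) <= eps ->
  Cnorm (Csub (Cadd X1 (Csc r (Cmul q X0))) (Csc (r ^ S n) (Cadd (b (S n)) (Cmul q (b n)))))
  <= (1 + r * Cnorm q) * eps.
Proof.
  intros H1 H0.
  replace (Csub (Cadd X1 (Csc r (Cmul q X0))) (Csc (r ^ S n) (Cadd (b (S n)) (Cmul q (b n)))))
    with (Cadd (Csub X1 (Csc (r ^ S n) (b (S n)))) (Csc r (Cmul q (Csub X0 (Csc (r ^ n) (b n))))))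
    by (simpl; cplx_ring).
  eapply Rle_trans; [apply Cnorm_add|].
  rewrite Cnorm_Csc, Cnorm_mul, Rabs_pos_eq by exact r_ge0.
  pose proof (Cnorm_ge0 q). assert (0 <= r * Cnorm q) by nra. nra.
Qed.

Lemma circle_coeff_bound q :
  nsq (Csc (r ^ 2) (Cadd (b 2) (Cmul q (b 1)))) + nsq (Csc (r ^ 3) (Cadd (b 3) (Cmul q (b 2))))
  <= 1 + r * r * nsq q.
Proof.
  apply nsq_sum_le_of_approx. intros eps Heps.
  set (K := 1 + r * Cnorm q).
  assert (HK : 0 < K) by (unfold K; pose proof (Cnorm_ge0 q); nra).
  destruct (dft_samples_converge (eps / K)) as [M0 HM0]; [apply Rdiv_lt_0_compat; lra|].
  set (M := Nat.max M0 4).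
  assert (Hclose : forall n, (S n < M)%nat ->
    Cnorm (Csub (Cadd (dft (samples M) M (S n)) (Csc r (Cmul q (dft (samples M) M n))))
                (Csc (r ^ S n) (Cadd (b (S n)) (Cmul q (b n))))) <= eps).
  { intros n Hn. replace eps with (K * (eps / K)) by (field; lra).
    apply shifted_coeff_close; apply HM0; unfold M; lia. }
  exists (Cadd (dft (samples M) M 2) (Csc r (Cmul q (dft (samples M) M 1)))),
         (Cadd (dft (samples M) M 3) (Csc r (Cmul q (dft (samples M) M 2)))).
  split; [|split]; [apply Hclose; unfold M; lia|apply Hclose; unfold M; lia|].
  apply dft_two_coeff_bound; [unfold M; lia|]. intros k. apply h_bound, Cnorm_uk.
Qed.

End CircleEstimate.

Lemma terms_bounded (f : Cplx -> Cplx) (a : nat -> Cplx) :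
  (forall z, Cnorm z < 1 -> Cseries_sum a z (f z)) ->
  forall rho, 0 <= rho < 1 -> exists K, forall m, Cnorm (a m) * rho ^ m <= K.
Proof.
  intros Hs rho Hr.
  destruct (Hs (rho, 0) ltac:(rewrite Cnorm_real; lra) 1 ltac:(lra)) as [N HN].
  exists (2 + rsum (fun m => Cnorm (a m) * rho ^ m) N). intros m.
  assert (Hnn : forall j, 0 <= Cnorm (a j) * rho ^ j).
  { intros j. apply Rmult_le_pos; [apply Cnorm_ge0|apply pow_le; lra]. }
  pose proof (rsum_ge0 _ N Hnn).
  destruct (Nat.lt_ge_cases m N) as [Hm|Hm].
  - pose proof (rsum_single (fun m => Cnorm (a m) * rho ^ m) N m Hm Hnn). simpl in *. lra.
  - pose proof (HN m ltac:(lia)) as H1. pose proof (HN (S m) ltac:(lia)) as H2. simpl in H2.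
    set (P := Cpartial a (rho, 0) m) in *. set (T := Cmul (a m) (Cpow (rho, 0) m)) in *.
    assert (HT : Cnorm T = Cnorm (a m) * rho ^ m)
      by (unfold T; rewrite Cnorm_mul, Cnorm_pow, Cnorm_real by lra; reflexivity).
    rewrite <- HT.
    replace T with (Csub (Csub (Cadd P T) (f (rho, 0))) (Csub P (f (rho, 0)))) by cplx_ring.
    pose proof (Cnorm_sub (Csub (Cadd P T) (f (rho, 0))) (Csub P (f (rho, 0)))). lra.
Qed.

Lemma radius_ge (f : Cplx -> Cplx) (a : nat -> Cplx) :
  (forall z, Cnorm z < 1 -> Cseries_sum a z (f z)) ->
  forall b : nat -> R, (forall n, Rabs (b n) <= Cnorm (a n)) ->
  forall x, Rabs x < 1 -> Rbar_lt (Rabs x) (CV_radius b).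
Proof.
  intros Hs b Hb x Hx.
  set (rho := (Rabs x + 1) / 2).
  assert (Hr : 0 <= rho < 1) by (pose proof (Rabs_pos x); unfold rho; lra).
  destruct (terms_bounded f a Hs rho Hr) as [K HK].
  assert (HE : Rbar_le rho (CV_radius b)).
  { apply (proj1 (CV_radius_bounded b)). exists K. intros n.
    rewrite Rabs_mult, <- RPow_abs, (Rabs_pos_eq rho) by lra.
    eapply Rle_trans; [|apply (HK n)]. apply Rmult_le_compat_r; [apply pow_le; lra|apply Hb]. }
  destruct (CV_radius b) as [r| |]; simpl in *; auto; unfold rho in HE; lra.
Qed.

Lemma is_pseries_rsum b t l : is_pseries b t l <-> Un_cv (rsum (fun k => b k * t ^ k)) l.
Proof.
  assert (E : forall n, scal (pow_n t n) (b n) = b n * t ^ n).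
  { intros n. rewrite pow_n_pow. apply Rmult_comm. }
  unfold is_pseries. split; intros H.
  - apply inf_Un_cv_rsum, is_series_Reals. exact (is_series_ext _ _ _ E H).
  - apply Un_cv_rsum_inf, is_series_Reals in H.
    exact (is_series_ext _ _ _ (fun n => eq_sym (E n)) H).
Qed.

Lemma derive_is_pseries (b : nat -> R) (phi : R -> R) r l :
  Rabs r < 1 -> (forall t, Rabs t < 1 -> PSeries b t = phi t) ->
  Rbar_lt (Rabs r) (CV_radius b) -> is_derive phi r l -> is_pseries (PS_derive b) r l.
Proof.
  intros Hr Heq Hrad Hd. apply Rabs_def2 in Hr.
  assert (H1 : is_derive phi r (PSeries (PS_derive b) r)).
  { eapply is_derive_ext_loc; [|apply is_derive_PSeries; exact Hrad].
    apply (locally_interval _ r (-1) 1); simpl; try lra.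
    intros y H1 H2. apply Heq, Rabs_def1; lra. }
  rewrite <- (is_derive_unique _ _ _ Hd), (is_derive_unique _ _ _ H1).
  apply PSeries_correct, ex_pseries_derive, Hrad.
Qed.

Lemma rsum_derive (b : nat -> R) r N :
  rsum (fun k => INR k * b k * r ^ k) (S N) = r * rsum (fun k => PS_derive b k * r ^ k) N.
Proof.
  induction N as [|N IH]; [simpl; ring|].
  change (rsum (fun k => INR k * b k * r ^ k) (S N) + INR (S N) * b (S N) * r ^ S N
          = r * (rsum (fun k => PS_derive b k * r ^ k) N + PS_derive b N * r ^ N)).
  rewrite IH. unfold PS_derive. simpl. ring.
Qed.

(* The real version of z f'(z) - f(z) = Σ (n-1) a_n z^n. *)
Lemma real_g_series (b : nat -> R) (phi : R -> R) r l :
  Rabs r < 1 -> (forall t, Rabs t < 1 -> PSeries b t = phi t) ->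
  Rbar_lt (Rabs r) (CV_radius b) -> is_derive phi r l ->
  Un_cv (rsum (fun k => (INR k - 1) * b k * r ^ k)) (r * l - phi r).
Proof.
  intros Hr Heq Hrad Hd.
  pose proof (proj1 (is_pseries_rsum _ _ _) (derive_is_pseries b phi r l Hr Heq Hrad Hd)) as Hder.
  assert (Hval : Un_cv (rsum (fun k => b k * r ^ k)) (phi r)).
  { rewrite <- (Heq r Hr). apply is_pseries_rsum, PSeries_correct, CV_radius_inside, Hrad. }
  assert (Hconst : Un_cv (fun _ => r) r).
  { intros eps He. exists O. intros. unfold R_dist. rewrite Rminus_diag, Rabs_R0. exact He. }
  assert (Hval' : Un_cv (fun n => rsum (fun k => b k * r ^ k) (S n)) (phi r)).
  { intros eps He. destruct (Hval eps He) as [N HN]. exists N. intros n Hn. apply HN. lia. }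
  pose proof (CV_minus _ _ _ _ (CV_mult _ _ _ _ Hconst Hder) Hval') as H.
  intros eps He. destruct (H eps He) as [N HN]. exists (S N). intros [|n] Hn; [lia|].
  specialize (HN n ltac:(lia)). rewrite <- rsum_derive in HN.
  replace (rsum (fun k => (INR k - 1) * b k * r ^ k) (S n))
    with (rsum (fun k => INR k * b k * r ^ k) (S n) - rsum (fun k => b k * r ^ k) (S n));
    [exact HN|].
  clear. induction (S n) as [|m IH]; simpl; [ring|]. rewrite <- IH. ring.
Qed.

(* Coefficients of g(z) = z f'(z) - f(z) = Σ (n-1) a_n z^n. *)
Definition gcoef (a : nat -> Cplx) (n : nat) : Cplx := Csc (INR n - 1) (a n).

(* Restricting f to a ray t ↦ t u (|u| = 1) and taking a real-linear coordinate [proj]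
   (the real or the imaginary part) gives a real power series in t, to which the real
   theory of termwise differentiation applies. *)
Section RealCoordinate.

Variable proj : Cplx -> R.
Hypothesis proj_add : forall z w, proj (Cadd z w) = proj z + proj w.
Hypothesis proj_Csc : forall t z, proj (Csc t z) = t * proj z.
Hypothesis proj_le : forall z, Rabs (proj z) <= Cnorm z.

Lemma proj_C0 : proj C0 = 0.
Proof. replace C0 with (Csc 0 C0) by cplx_ring. rewrite proj_Csc. ring. Qed.

Lemma proj_sub z w : proj (Csub z w) = proj z - proj w.
Proof.
  replace (Csub z w) with (Cadd z (Csc (-1) w)) by cplx_ring.
  rewrite proj_add, proj_Csc. ring.
Qed.

(* [proj] is 1-Lipschitz, hence continuous. *)
Lemma CL_proj s l : CL s l -> Un_cv (fun n => proj (s n)) (proj l).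
Proof.
  intros H eps He. destruct (H eps He) as [N HN]. exists N. intros n Hn.
  unfold R_dist. rewrite <- proj_sub. eapply Rle_lt_trans; [apply proj_le|]. apply HN, Hn.
Qed.

Definition ray_coef (a : nat -> Cplx) (u : Cplx) (n : nat) : R := proj (Cmul (a n) (Cpow u n)).

Lemma proj_partial a u t N :
  proj (Cpartial a (Csc t u) N) = rsum (fun k => ray_coef a u k * t ^ k) N.
Proof.
  induction N as [|N IH]; simpl; [apply proj_C0|]. rewrite proj_add, IH. f_equal.
  unfold ray_coef. rewrite Cpow_Csc, Rmult_comm, <- proj_Csc. f_equal. cplx_ring.
Qed.

Lemma ray_coef_bound a u n : Cnorm u = 1 -> Rabs (ray_coef a u n) <= Cnorm (a n).
Proof.
  intros Hu. unfold ray_coef. eapply Rle_trans; [apply proj_le|].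
  rewrite Cnorm_mul, Cnorm_pow, Hu, pow1. lra.
Qed.

Variables (f : Cplx -> Cplx) (a : nat -> Cplx) (u : Cplx).
Hypothesis f_series : forall z, Cnorm z < 1 -> Cseries_sum a z (f z).
Hypothesis u_unit : Cnorm u = 1.

Lemma Cnorm_ray t : Cnorm (Csc t u) = Rabs t.
Proof. rewrite Cnorm_Csc, u_unit. ring. Qed.

Lemma ray_PSeries t : Rabs t < 1 -> PSeries (ray_coef a u) t = proj (f (Csc t u)).
Proof.
  intros Ht. apply is_pseries_unique, is_pseries_rsum.
  eapply Un_cv_ext; [|apply CL_proj, f_series; rewrite Cnorm_ray; exact Ht].
  intros n. apply proj_partial.
Qed.

Lemma ray_derive r d : Cderiv f (Csc r u) d ->
  is_derive (fun t => proj (f (Csc t u))) r (proj (Cmul u d)).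
Proof.
  intros Hd. apply is_derive_Reals. intros eps He.
  destruct (Hd (eps/2) ltac:(lra)) as [delta [Hdel H]].
  exists (mkposreal delta Hdel). intros h Hh0 Hh. simpl in Hh.
  pose proof (Rabs_pos_lt h Hh0) as Hh1.
  specialize (H (Csc h u) ltac:(rewrite Cnorm_ray; lra)). rewrite Cnorm_ray in H.
  replace (Cadd (Csc r u) (Csc h u)) with (Csc (r + h) u) in H by cplx_ring.
  set (D := proj (f (Csc (r + h) u)) - proj (f (Csc r u)) - h * proj (Cmul u d)).
  assert (HD : Rabs D <= eps / 2 * Rabs h).
  { eapply Rle_trans; [|exact H]. unfold D. rewrite <- proj_Csc, <- !proj_sub.
    replace (Csc h (Cmul u d)) with (Cmul d (Csc h u)) by cplx_ring. apply proj_le. }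
  replace ((proj (f (Csc (r + h) u)) - proj (f (Csc r u))) / h - proj (Cmul u d))
    with (D / h) by (unfold D; field; exact Hh0).
  unfold Rdiv. rewrite Rabs_mult, Rabs_inv.
  apply Rle_lt_trans with (eps / 2 * Rabs h * / Rabs h).
  - apply Rmult_le_compat_r; [left; apply Rinv_0_lt_compat|]; assumption.
  - rewrite Rmult_assoc, Rinv_r by lra. lra.
Qed.

Lemma ray_g_series r d : Rabs r < 1 -> Cderiv f (Csc r u) d ->
  Un_cv (fun N => proj (Cpartial (gcoef a) (Csc r u) N))
        (proj (Csub (Cmul (Csc r u) d) (f (Csc r u)))).
Proof.
  intros Hr Hd.
  pose proof (real_g_series (ray_coef a u) (fun t => proj (f (Csc t u))) r (proj (Cmul u d)) Hr
    ray_PSeries (radius_ge f a f_series _ (fun n => ray_coef_bound a u n u_unit) r Hr)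
    (ray_derive r d Hd)) as H.
  replace (Cmul (Csc r u) d) with (Csc r (Cmul u d)) by cplx_ring.
  rewrite proj_sub, proj_Csc.
  eapply Un_cv_ext; [|exact H]. intros n. cbv beta. rewrite proj_partial.
  apply rsum_ext. intros k _. unfold ray_coef, gcoef.
  replace (Cmul (Csc (INR k - 1) (a k)) (Cpow u k))
    with (Csc (INR k - 1) (Cmul (a k) (Cpow u k))) by cplx_ring.
  rewrite proj_Csc. ring.
Qed.

End RealCoordinate.

Lemma g_series f a u r d :
  (forall z, Cnorm z < 1 -> Cseries_sum a z (f z)) -> Cnorm u = 1 -> Rabs r < 1 ->
  Cderiv f (Csc r u) d ->
  Cseries_sum (gcoef a) (Csc r u) (Csub (Cmul (Csc r u) d) (f (Csc r u))).
Proof.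
  intros Hs Hu Hr Hd. apply CL_comp.
  - exact (ray_g_series fst (fun _ _ => eq_refl) (fun _ _ => eq_refl) fst_le_Cnorm
             f a u Hs Hu r d Hr Hd).
  - exact (ray_g_series snd (fun _ _ => eq_refl) (fun _ _ => eq_refl) snd_le_Cnorm
             f a u Hs Hu r d Hr Hd).
Qed.

Lemma ex_series_rsum (w : nat -> R) : ex_series w -> exists L, Un_cv (rsum w) L.
Proof. intros [L HL]. exists L. apply inf_Un_cv_rsum, is_series_Reals, HL. Qed.

(* Σ (m+1) |a_m| r^m converges for r < 1: the derived majorant series has the same radius. *)
Lemma weighted_series_ex f a r :
  (forall z, Cnorm z < 1 -> Cseries_sum a z (f z)) -> 0 <= r < 1 ->
  ex_series (fun m => (INR m + 1) * Cnorm (a m) * r ^ m).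
Proof.
  intros Hs Hr.
  set (al := fun m => Cnorm (a m)).
  set (ga := PS_plus al (PS_incr_1 (PS_derive al))).
  assert (Hal : Rbar_lt (Rabs r) (CV_radius al)).
  { apply (radius_ge f a Hs al); [|rewrite Rabs_pos_eq; lra].
    intros n. unfold al. rewrite Rabs_pos_eq by apply Cnorm_ge0. lra. }
  assert (Hga : Rbar_lt (Rabs r) (CV_radius ga)).
  { eapply Rbar_lt_le_trans; [|apply CV_radius_plus].
    rewrite CV_radius_incr_1, CV_radius_derive. apply Rbar_min_case; exact Hal. }
  eapply ex_series_ext; [|exact (CV_disk_inside ga r Hga)]. intros i. cbv beta.
  assert (Eg : ga i = (INR i + 1) * Cnorm (a i)).
  { unfold ga, al, PS_plus, PS_incr_1, PS_derive. destruct i as [|i].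
    - change (Cnorm (a 0%nat) + 0 = (INR 0 + 1) * Cnorm (a 0%nat)). simpl. ring.
    - change (Cnorm (a (S i)) + INR (S i) * Cnorm (a (S i)) = (INR (S i) + 1) * Cnorm (a (S i))).
      ring. }
  rewrite Eg, Rabs_pos_eq; [reflexivity|].
  pose proof (Cnorm_ge0 (a i)). pose proof (pos_INR i). pose proof (pow_le r i (proj1 Hr)).
  apply Rmult_le_pos; [nra|assumption].
Qed.

Definition hcoef (a : nat -> Cplx) (n : nat) : Cplx := Csc 2 (gcoef a n).

Lemma hcoef_abs_converges f a r :
  (forall z, Cnorm z < 1 -> Cseries_sum a z (f z)) -> 0 <= r < 1 ->
  exists L, Un_cv (rsum (fun m => Cnorm (hcoef a m) * r ^ m)) L.
Proof.
  intros Hs Hr. apply ex_series_rsum.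
  apply (@ex_series_le R_AbsRing R_CompleteNormedModule _
           (fun m => scal 2 ((INR m + 1) * Cnorm (a m) * r ^ m))).
  - intros m. change (norm (Cnorm (hcoef a m) * r ^ m)) with (Rabs (Cnorm (hcoef a m) * r ^ m)).
    change (scal 2 ((INR m + 1) * Cnorm (a m) * r ^ m))
      with (2 * ((INR m + 1) * Cnorm (a m) * r ^ m)).
    pose proof (pow_le r m (proj1 Hr)). pose proof (Cnorm_ge0 (a m)). pose proof (pos_INR m).
    rewrite Rabs_pos_eq by (apply Rmult_le_pos; [apply Cnorm_ge0|assumption]).
    unfold hcoef, gcoef. rewrite !Cnorm_Csc, (Rabs_pos_eq 2) by lra.
    assert (Rabs (INR m - 1) <= INR m + 1) by (apply Rabs_le; lra).
    assert (0 <= Cnorm (a m) * r ^ m) by nra. nra.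
  - apply (@ex_series_scal_l R_AbsRing R_NormedModule 2
             (fun m => (INR m + 1) * Cnorm (a m) * r ^ m)).
    exact (weighted_series_ex f a r Hs Hr).
Qed.

Lemma omega_derivative f a : in_Omega f a ->
  exists D : Cplx -> Cplx, forall z, Cnorm z < 1 ->
    Cderiv f z (D z) /\ Cnorm (Csub (Cmul z (D z)) (f z)) < / 2.
Proof.
  intros [_ [_ [_ Hd]]].
  assert (HD : forall z, exists d, Cnorm z < 1 ->
                 Cderiv f z d /\ Cnorm (Csub (Cmul z d) (f z)) < / 2).
  { intros z. destruct (classic (Cnorm z < 1)) as [H|H].
    - destruct (Hd z H) as [d Hd']. exists d. intros _. exact Hd'.
    - exists C0. intros H'. contradiction. }
  exists (fun z => proj1_sig (constructive_indefinite_description _ (HD z))).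
  intros z. exact (proj2_sig (constructive_indefinite_description _ (HD z))).
Qed.

Lemma Cpartial_Csc c z t N : Cpartial (fun n => Csc t (c n)) z N = Csc t (Cpartial c z N).
Proof. induction N as [|N IH]; simpl; [cplx_ring|]. rewrite IH. cplx_ring. Qed.

(* The circle estimate for h = 2 (z f' - f), whose coefficients of order 1, 2, 3 are
   0, 2 a_2 and 4 a_3. *)
Lemma omega_circle_estimate f a q r : in_Omega f a -> 0 < r < 1 ->
  r ^ 4 * nsq (Csc 2 (a 2%nat)) + r ^ 6 * nsq (Cadd (Csc 4 (a 3%nat)) (Cmul q (Csc 2 (a 2%nat))))
  <= 1 + r * r * nsq q.
Proof.
  intros HO Hr. pose proof HO as [_ [_ [Hs _]]].
  destruct (omega_derivative f a HO) as [D HD].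
  set (h := fun z => Csc 2 (Csub (Cmul z (D z)) (f z))).
  assert (Hray : forall u, Cnorm u = 1 -> Cnorm (Csc r u) < 1).
  { intros u Hu. rewrite Cnorm_Csc, Hu, Rabs_pos_eq; lra. }
  assert (Hseries : forall u, Cnorm u = 1 -> Cseries_sum (hcoef a) (Csc r u) (h (Csc r u))).
  { intros u Hu.
    apply (CL_ext (fun N => Cmul (2, 0) (Cpartial (gcoef a) (Csc r u) N)) _ _ O).
    - intros N _. unfold hcoef. rewrite Cpartial_Csc, (Csc_Cmul 2). reflexivity.
    - unfold h. rewrite (Csc_Cmul 2). apply CL_cmul, g_series; try assumption.
      + rewrite Rabs_pos_eq; lra.
      + apply HD, Hray, Hu. }
  assert (Hbound : forall u, Cnorm u = 1 -> Cnorm (h (Csc r u)) <= 1).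
  { intros u Hu. unfold h. rewrite Cnorm_Csc, Rabs_pos_eq by lra.
    pose proof (proj2 (HD _ (Hray u Hu))). lra. }
  pose proof (circle_coeff_bound (hcoef a) h r ltac:(lra) Hseries Hbound
                (hcoef_abs_converges f a r Hs ltac:(lra)) q) as H.
  assert (E2 : Cadd (hcoef a 2) (Cmul q (hcoef a 1)) = Csc 2 (a 2%nat))
    by (unfold hcoef, gcoef; simpl INR; cplx_ring).
  assert (E3 : Cadd (hcoef a 3) (Cmul q (hcoef a 2))
               = Cadd (Csc 4 (a 3%nat)) (Cmul q (Csc 2 (a 2%nat))))
    by (unfold hcoef, gcoef; simpl INR; cplx_ring).
  rewrite E2, E3, !(nsq_Csc (r ^ _)) in H.
  replace (r ^ 4) with (r ^ 2 * r ^ 2) by ring. replace (r ^ 6) with (r ^ 3 * r ^ 3) by ring.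
  exact H.
Qed.

Lemma bernoulli_le n t : 0 <= t <= 1 -> 1 - INR n * t <= (1 - t) ^ n.
Proof.
  intros Ht. induction n as [|n IH]; [simpl; lra|].
  rewrite S_INR. simpl. pose proof (pow_le (1 - t) n ltac:(lra)).
  assert (0 <= INR n * t) by (apply Rmult_le_pos; [apply pos_INR|lra]). nra.
Qed.

Lemma radial_limit X Y Q : 0 <= X -> 0 <= Y -> 0 <= Q ->
  (forall r, 0 < r < 1 -> r ^ 4 * X + r ^ 6 * Y <= 1 + r * r * Q) -> X + Y <= 1 + Q.
Proof.
  intros HX HY HQ H.
  apply (le_of_le_eps _ (4 * X + 6 * Y)); [lra|]. intros eps Heps.
  destruct (Rlt_le_dec eps 1) as [Hlt|Hge]; [|nra].
  specialize (H (1 - eps) ltac:(lra)).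
  pose proof (bernoulli_le 4 eps ltac:(lra)) as B4.
  pose proof (bernoulli_le 6 eps ltac:(lra)) as B6.
  simpl INR in B4, B6.
  assert ((1 - eps) * (1 - eps) * Q <= Q) by (assert ((1 - eps) * (1 - eps) <= 1) by nra; nra).
  nra.
Qed.

(* Schur's inequality |B3| <= 1 - |B2|^2, from the family of estimates indexed by q:
   take q = conj(B2) B3 / (1 - |B2|^2). *)
Lemma schur_bound B2 B3 :
  (forall q, nsq B2 + nsq (Cadd B3 (Cmul q B2)) <= 1 + nsq q) ->
  nsq B2 <= 1 /\ Cnorm B3 <= 1 - nsq B2.
Proof.
  intros H.
  assert (H0 := H C0).
  replace (Cadd B3 (Cmul C0 B2)) with B3 in H0 by cplx_ring.
  replace (nsq C0) with 0 in H0 by (unfold nsq, C0; simpl; ring).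
  pose proof (nsq_ge0 B2). pose proof (nsq_ge0 B3).
  split; [lra|]. apply Cnorm_le_sq; [lra|].
  set (p := nsq B2) in *. set (b := nsq B3) in *.
  destruct (Req_dec p 1) as [Hp|Hp]; [assert (b = 0) by lra; nra|].
  set (s := / (1 - p)).
  assert (Hs : s * (1 - p) = 1) by (unfold s; field; lra).
  specialize (H (Csc s (Cmul (Cconj B2) B3))).
  assert (E : Cadd B3 (Cmul (Csc s (Cmul (Cconj B2) B3)) B2) = Csc s B3).
  { replace s with (1 + s * p) at 2 by nra. unfold p, nsq. cplx_ring. }
  assert (Eq : nsq (Csc s (Cmul (Cconj B2) B3)) = s * s * p * b).
  { unfold p, b, nsq, Csc, Cmul, Cconj; simpl. ring. }
  rewrite E, Eq, nsq_Csc in H. fold b in H.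
  assert (Hsb : s * s * b <= 1).
  { apply Rmult_le_reg_r with (1 - p); [lra|]. nra. }
  replace b with ((s * s * b) * ((1 - p) * (1 - p))) by
    (transitivity (b * (s * (1 - p)) * (s * (1 - p))); [ring|rewrite Hs; ring]).
  assert (0 <= (1 - p) * (1 - p)) by nra. nra.
Qed.

Lemma fekete_szego_upper f a mu : in_Omega f a ->
  Cnorm (Csub (a 3%nat) (Cmul mu (Cmul (a 2%nat) (a 2%nat)))) <= / 4 * Rmax 1 (Cnorm mu).
Proof.
  intros HO.
  set (B2 := Csc 2 (a 2%nat)). set (B3 := Csc 4 (a 3%nat)).
  assert (HP : forall q, nsq B2 + nsq (Cadd B3 (Cmul q B2)) <= 1 + nsq q).
  { intros q. apply radial_limit; try apply nsq_ge0.
    intros r Hr. exact (omega_circle_estimate f a q r HO Hr). }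
  destruct (schur_bound B2 B3 HP) as [H1 H2].
  replace (Csub (a 3%nat) (Cmul mu (Cmul (a 2%nat) (a 2%nat))))
    with (Csc (/4) (Csub B3 (Cmul mu (Cmul B2 B2)))) by (unfold B2, B3; cplx_ring).
  rewrite Cnorm_Csc, Rabs_pos_eq by lra.
  apply Rmult_le_compat_l; [lra|].
  eapply Rle_trans; [apply Cnorm_sub|].
  rewrite !Cnorm_mul, Cnorm_sq.
  pose proof (nsq_ge0 B2). pose proof (Cnorm_ge0 mu).
  pose proof (Rmax_l 1 (Cnorm mu)). pose proof (Rmax_r 1 (Cnorm mu)).
  assert (Cnorm mu * nsq B2 <= Rmax 1 (Cnorm mu) * nsq B2) by (apply Rmult_le_compat_r; lra).
  nra.
Qed.

Lemma poly_series (a : nat -> Cplx) z : (forall n, (4 <= n)%nat -> a n = C0) ->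
  Cseries_sum a z (Cpartial a z 4).
Proof.
  intros Ha. apply (CL_ext (fun _ => Cpartial a z 4) _ _ 4); [|apply CL_const].
  intros n Hn. induction Hn as [|m Hm IH]; [reflexivity|].
  simpl. rewrite <- IH, (Ha m Hm). cplx_ring.
Qed.

Lemma Cderiv_quadratic f z d (Rem : Cplx -> Cplx) C : 0 <= C ->
  (forall h, Cnorm h <= 1 -> Cnorm (Rem h) <= C) ->
  (forall h, Csub (Csub (f (Cadd z h)) (f z)) (Cmul d h) = Cmul (Cmul h h) (Rem h)) ->
  Cderiv f z d.
Proof.
  intros HC HR HE eps Heps.
  exists (Rmin 1 (eps / (C + 1))). split; [apply Rmin_glb_lt; [lra|apply Rdiv_lt_0_compat; lra]|].
  intros h [Hh0 Hh]. pose proof (Rmin_l 1 (eps / (C + 1))). pose proof (Rmin_r 1 (eps / (C + 1))).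
  rewrite HE, !Cnorm_mul. specialize (HR h ltac:(lra)).
  pose proof (Cnorm_ge0 (Rem h)).
  assert (Hhe : Cnorm h * (C + 1) <= eps).
  { apply Rle_trans with (eps / (C + 1) * (C + 1)); [apply Rmult_le_compat_r; lra|].
    right. field. lra. }
  apply Rle_trans with (Cnorm h * (Cnorm h * C)).
  - rewrite Rmult_assoc. apply Rmult_le_compat_l; [lra|]. apply Rmult_le_compat_l; lra.
  - rewrite (Rmult_comm eps). apply Rmult_le_compat_l; nra.
Qed.

(* Extremal function for |μ| >= 1: f(z) = z + z^2/2, with z f' - f = z^2/2. *)
Definition f_sq (z : Cplx) : Cplx := Cadd z (Csc (/2) (Cmul z z)).
Definition a_sq (n : nat) : Cplx := match n with 1%nat => C1 | 2%nat => (/2, 0) | _ => C0 end.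

Lemma f_sq_in_Omega : in_Omega f_sq a_sq.
Proof.
  split; [reflexivity|]. split; [reflexivity|]. split.
  - intros z _. replace (f_sq z) with (Cpartial a_sq z 4) by (unfold f_sq; simpl; cplx_ring).
    apply poly_series. intros n Hn. do 4 (destruct n; [lia|]). reflexivity.
  - intros z Hz. exists (Cadd C1 z). split.
    + apply (Cderiv_quadratic _ _ _ (fun _ => (/2, 0)) (/2)); [lra| |].
      * intros h _. rewrite Cnorm_real; lra.
      * intros h. unfold f_sq. cplx_ring.
    + replace (Csub (Cmul z (Cadd C1 z)) (f_sq z)) with (Csc (/2) (Cmul z z))
        by (unfold f_sq; cplx_ring).
      rewrite Cnorm_Csc, Cnorm_mul, Rabs_pos_eq by lra. pose proof (Cnorm_ge0 z). nra.
Qed.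

(* Extremal function for |μ| < 1: f(z) = z + z^3/4, with z f' - f = z^3/2. *)
Definition f_cube (z : Cplx) : Cplx := Cadd z (Csc (/4) (Cmul z (Cmul z z))).
Definition a_cube (n : nat) : Cplx := match n with 1%nat => C1 | 3%nat => (/4, 0) | _ => C0 end.

Lemma f_cube_in_Omega : in_Omega f_cube a_cube.
Proof.
  split; [reflexivity|]. split; [reflexivity|]. split.
  - intros z _. replace (f_cube z) with (Cpartial a_cube z 4) by (unfold f_cube; simpl; cplx_ring).
    apply poly_series. intros n Hn. do 4 (destruct n; [lia|]). reflexivity.
  - intros z Hz. pose proof (Cnorm_ge0 z). exists (Cadd C1 (Csc (3/4) (Cmul z z))). split.
    + apply (Cderiv_quadratic _ _ _ (fun h => Csc (/4) (Cadd (Csc 3 z) h)) 1); [lra| |].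
      * intros h Hh. rewrite Cnorm_Csc, Rabs_pos_eq by lra.
        pose proof (Cnorm_add (Csc 3 z) h). rewrite Cnorm_Csc, (Rabs_pos_eq 3) in H0 by lra. lra.
      * intros h. unfold f_cube. cplx_ring.
    + replace (Csub (Cmul z (Cadd C1 (Csc (3/4) (Cmul z z)))) (f_cube z))
        with (Csc (/2) (Cmul z (Cmul z z))) by (unfold f_cube; cplx_ring).
      rewrite Cnorm_Csc, !Cnorm_mul, Rabs_pos_eq by lra.
      assert (Cnorm z * Cnorm z < 1) by nra. nra.
Qed.

Lemma fekete_szego_sharp mu : exists (f : Cplx -> Cplx) (a : nat -> Cplx), in_Omega f a /\
  Cnorm (Csub (a 3%nat) (Cmul mu (Cmul (a 2%nat) (a 2%nat)))) = / 4 * Rmax 1 (Cnorm mu).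
Proof.
  destruct (Rle_dec 1 (Cnorm mu)) as [H|H].
  - exists f_sq, a_sq. split; [exact f_sq_in_Omega|]. rewrite Rmax_right by lra.
    replace (Csub (a_sq 3%nat) (Cmul mu (Cmul (a_sq 2%nat) (a_sq 2%nat)))) with (Csc (- / 4) mu)
      by (simpl; cplx_ring).
    rewrite Cnorm_Csc, Rabs_left by lra. ring.
  - exists f_cube, a_cube. split; [exact f_cube_in_Omega|]. rewrite Rmax_left by lra.
    replace (Csub (a_cube 3%nat) (Cmul mu (Cmul (a_cube 2%nat) (a_cube 2%nat))))
      with ((/4, 0) : Cplx)
      by (simpl; cplx_ring).
    rewrite Cnorm_real by lra. ring.
Qed.

Theorem theorem6p2 (mu : Cplx) :
  (forall (f : Cplx -> Cplx) (a : nat -> Cplx), in_Omega f a ->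
     Cnorm (Csub (a 3%nat) (Cmul mu (Cmul (a 2%nat) (a 2%nat)))) <= / 4 * Rmax 1 (Cnorm mu))
  /\
  (exists (f : Cplx -> Cplx) (a : nat -> Cplx), in_Omega f a /\
     Cnorm (Csub (a 3%nat) (Cmul mu (Cmul (a 2%nat) (a 2%nat)))) = / 4 * Rmax 1 (Cnorm mu)).
Proof.
  split.
  - intros f a HO. exact (fekete_szego_upper f a mu HO).
  - apply fekete_szego_sharp.
Qed.
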